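(* Fix $K>0$ and $z\in\mathbb{C}$, and assume $b_n\ge m\ge m_0$ for a sufficiently large constant $m_0$. For all sufficiently large $n$ (depending on $K$) the following holds on the event $\mathcal{E}_K$: for every unit vector $v\in\mathbb{C}^n$ that is orthogonal to $\mathcal{H}_1$, and for every $i\in[m-1]$, either $\|v_{[i]}\|\ge b_n^{-10m}m^{-1/2}$ or $\|v_{[i+1]}\|\ge b_n^{-10m}m^{-1/2}$.
   Context: Let $b_n$ divide $n$, $m=n/b_n$, $c_n=3b_n$. Let $\tilde D_i,\tilde U_i,\tilde T_i$ ($i\in[m]$) be $b_n\times b_n$ matrices, $D_i=\tilde D_i/\sqrt{c_n}$, $U_i=\tilde U_i/\sqrt{c_n}$, $T_i=\tilde T_i/\sqrt{c_n}$, $(D_i)_z=D_i-zI_{b_n}$. Let $X$ be the $n\times n$ block matrix ($m\times m$ blocks of size $b_n$, block indices modulo $m$) with $(i,i)$ block $D_i$, $(i,i-1)$ block $T_{i-1}$, $(i,i+1)$ block $U_{i+1}$, other blocks zero, and $X_z=X-zI$. $\mathcal{H}_1$ is the span of all rows of $X_z$ except the first. $\mathcal{E}_K$ is the event that for all $i\in[m]$: $\|U_i\|,\|(D_i)_z\|,\|T_i\|\le K$ and the smallest singular values satisfy $s_{b_n}(U_i),s_{b_n}(T_i)\ge b_n^{-5}$. For $v\in\mathbb{C}^n$, $v_{[1]},\dots,v_{[m]}\in\mathbb{C}^{b_n}$ are the consecutive blocks of $b_n$ coordinates of $v$. *)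

From HB Require Import structures.
From mathcomp Require Import all_boot all_order all_algebra.
From mathcomp Require Import all_classical all_reals.
From mathcomp.real_closed Require Import complex.
Set Implicit Arguments. Unset Strict Implicit. Unset Printing Implicit Defensive.
Import Order.TTheory GRing.Theory Num.Theory.
Local Open Scope ring_scope.

Section Defs.
Variable R : realType.
Local Notation C := R[i].

Definition vnorm p q (x : 'M[C]_(p, q)) : R :=
  Num.sqrt (\sum_(i < p) \sum_(j < q) ((complex.Re (x i j)) ^+ 2 + (complex.Im (x i j)) ^+ 2)).

Definition cdot p (x y : 'rV[C]_p) : C := \sum_(j < p) x 0 j * (y 0 j)^*%C.

(* ||A|| <= K for the operator (spectral) norm: sup_{x<>0} |Ax|/|x| <= K. *)
Definition opnorm_le p (A : 'M[C]_p) (K : R) : Prop :=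
  forall x : 'cV[C]_p, vnorm (A *m x) <= K * vnorm x.

(* s_p(A) >= e for the smallest singular value of a square matrix,
   s_p(A) = min_{|x|=1} |Ax|. *)
Definition smin_ge p (A : 'M[C]_p) (e : R) : Prop :=
  forall x : 'cV[C]_p, e * vnorm x <= vnorm (A *m x).

(* Normalisation: D_i = Dt_i / sqrt(c_n), c_n = 3 b_n. *)
Definition scaleb (b : nat) (A : 'M[C]_b) : 'M[C]_b :=
  (real_complex R (Num.sqrt (3 * b)%:R)^-1) *: A.

(* The n x n block matrix X (n = sum over m blocks of size b), blocks indexed
   by 'I_m modulo m: block (i,i) = D_i, (i,i-1) = T_{i-1}, (i,i+1) = U_{i+1}. *)
Definition blockX (b m : nat) (D U T : 'I_m -> 'M[C]_b)
  : 'M[C]_(\sum_(i < m) b) :=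
  \mxblock_(i < m, j < m)
     ((if j == i then D i else 0)
      + (if j == ord_pred i then T j else 0)
      + (if j == ordS i then U j else 0) : 'M[C]_b).

Definition blockXz (b m : nat) (D U T : 'I_m -> 'M[C]_b) (z : C)
  : 'M[C]_(\sum_(i < m) b) := blockX D U T - z%:M.

Definition H1 p (A : 'M[C]_p) : 'rV[C]_p -> Prop :=
  fun h => exists c : 'I_p -> C,
    (forall k : 'I_p, (k : nat) = 0%N -> c k = 0) /\
    h = \sum_(k < p) c k *: row k A.

Definition vblock (b m : nat) (v : 'rV[C]_(\sum_(i < m) b)) (i : 'I_m)
  : 'rV[C]_b := submxrow v i.

Definition eventEK (b m : nat) (D U T : 'I_m -> 'M[C]_b) (z : C) (K : R)
  : Prop :=
  forall i : 'I_m,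
    [/\ opnorm_le (U i) K, opnorm_le (D i - z%:M) K, opnorm_le (T i) K,
        smin_ge (U i) ((b%:R : R) ^- 5) & smin_ge (T i) ((b%:R : R) ^- 5)].

End Defs.

(* Write w for the conjugate transpose of v.  Orthogonality of v to every row
   of X_z but the first means that X_z w vanishes off its first coordinate, so
   each block row k > 0 gives
     (D_k - z) w_k + T_(k-1) w_(k-1) + U_(k+1) w_(k+1) = 0.
   On E_K the blocks U and T have smallest singular value >= b^-5 and all
   blocks norm <= K, so solving for w_(k+1) or for w_(k-1) gives, with
   c = 2 K^2 b^10,  |w_(k+1)|^2 <= c (|w_(k-1)|^2 + |w_k|^2)  and symmetrically.
   Hence if two consecutive blocks have |v_[i]|^2 <= e^2, every block has
   |v_[k]|^2 <= (2c+1)^m e^2, and summing, 1 = |v|^2 <= m (2c+1)^m e^2.  With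
   e = b^(-10m) / sqrt m this is (2c+1)^m b^(-20m) < 1 as soon as
   b^2 > 4K^2 + 1, a contradiction. *)

From HB Require Import structures.
From mathcomp Require Import all_boot all_order all_algebra.
From mathcomp Require Import all_classical all_reals.
From mathcomp.real_closed Require Import complex.
From mathcomp Require Import lra zify.
Set Implicit Arguments. Unset Strict Implicit. Unset Printing Implicit Defensive.
Import Order.TTheory GRing.Theory Num.Theory.
Local Open Scope ring_scope.

Section SquaredNorm.
Variable R : realType.
Local Notation C := R[i].

Definition sqmod (x : C) : R := complex.Re x ^+ 2 + complex.Im x ^+ 2.

Lemma sqmod_ge0 x : 0 <= sqmod x.
Proof. by rewrite addr_ge0 ?sqr_ge0. Qed.

Lemma sqmodN x : sqmod (- x) = sqmod x.
Proof. by case: x => a c; rewrite /sqmod /= !sqrrN. Qed.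

Lemma sqmod_conj x : sqmod x^*%C = sqmod x.
Proof. by case: x => a c; rewrite /sqmod /= sqrrN. Qed.

Lemma sqmodD_le x y : sqmod (x + y) <= 2 * sqmod x + 2 * sqmod y.
Proof.
case: x y => a c [b d]; rewrite /sqmod /=.
have := sqr_ge0 (a - b); have := sqr_ge0 (c - d); rewrite !expr2; nra.
Qed.

Definition sqnorm p q (A : 'M[C]_(p, q)) : R := \sum_i \sum_j sqmod (A i j).

Definition conjT p q (A : 'M[C]_(p, q)) : 'M[C]_(q, p) := (map_mx conjc A)^T.

Lemma sqnorm_ge0 p q (A : 'M[C]_(p, q)) : 0 <= sqnorm A.
Proof. by apply: sumr_ge0 => i _; apply: sumr_ge0 => j _; apply: sqmod_ge0. Qed.

Lemma sqr_vnorm p q (A : 'M[C]_(p, q)) : vnorm A ^+ 2 = sqnorm A.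
Proof. by rewrite sqr_sqrtr // sqnorm_ge0. Qed.

Lemma sqnormN p q (A : 'M[C]_(p, q)) : sqnorm (- A) = sqnorm A.
Proof. by apply: eq_bigr => i _; apply: eq_bigr => j _; rewrite mxE sqmodN. Qed.

Lemma sqnormD_le p q (A B : 'M[C]_(p, q)) :
  sqnorm (A + B) <= 2 * sqnorm A + 2 * sqnorm B.
Proof.
rewrite !mulr_sumr -big_split; apply: ler_sum => i _.
rewrite !mulr_sumr -big_split; apply: ler_sum => j _.
by rewrite mxE sqmodD_le.
Qed.

Lemma sqnorm_conjT p q (A : 'M[C]_(p, q)) : sqnorm (conjT A) = sqnorm A.
Proof.
rewrite /sqnorm exchange_big; apply: eq_bigr => i _; apply: eq_bigr => j _.
by rewrite !mxE sqmod_conj.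
Qed.

Lemma sqnorm_submxrow p k (q_ : 'I_k -> nat) (A : 'M[C]_(p, \sum_j q_ j)) :
  sqnorm A = \sum_j sqnorm (submxrow A j).
Proof.
rewrite /sqnorm [RHS]exchange_big; apply: eq_bigr => i _.
rewrite sig_big_dep /= (reindex _ tagnat.sig_bij_on) /=.
by apply: eq_bigr => l _; rewrite mxE -tagnat.rankE tagnat.sigK.
Qed.

Lemma sqnorm_mul_le p (A : 'M[C]_p) K (x : 'cV[C]_p) :
  opnorm_le A K -> 0 <= K -> sqnorm (A *m x) <= K ^+ 2 * sqnorm x.
Proof.
move=> /(_ x) AxK K0; rewrite -!sqr_vnorm -exprMn.
by rewrite ler_pXn2r // nnegrE ?mulr_ge0 ?sqrtr_ge0.
Qed.

Lemma sqnorm_mul_ge p (A : 'M[C]_p) e (x : 'cV[C]_p) :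
  smin_ge A e -> 0 <= e -> e ^+ 2 * sqnorm x <= sqnorm (A *m x).
Proof.
move=> /(_ x) eAx e0; rewrite -!sqr_vnorm -exprMn.
by rewrite ler_pXn2r // nnegrE ?mulr_ge0 ?sqrtr_ge0.
Qed.

Lemma sqnorm_le_of_mulmx_add3_eq0 p (A B B' : 'M[C]_p) (x y y' : 'cV[C]_p) e K :
  A *m x + B *m y + B' *m y' = 0 ->
  smin_ge A e -> opnorm_le B K -> opnorm_le B' K -> 0 < e -> 0 <= K ->
  sqnorm x <= 2 * K ^+ 2 / e ^+ 2 * (sqnorm y + sqnorm y').
Proof.
move=> sum0 eA KB KB' e0 K0.
have Ax : A *m x = - (B *m y + B' *m y').
  by apply/eqP; rewrite -addr_eq0 addrA sum0.
have upper : sqnorm (A *m x) <= 2 * K ^+ 2 * (sqnorm y + sqnorm y').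
  rewrite Ax sqnormN; apply: le_trans (sqnormD_le _ _) _.
  have := sqnorm_mul_le y KB K0; have := sqnorm_mul_le y' KB' K0; lra.
rewrite mulrAC ler_pdivlMr ?exprn_gt0 // mulrC.
exact: le_trans (sqnorm_mul_ge x eA (ltW e0)) upper.
Qed.

End SquaredNorm.

Lemma propagate_forward (R : realFieldType) (c : R) (m : nat)
    (s : nat -> R) (i : nat) (eps : R) :
  0 <= c ->
  (forall k, (k.+2 < m)%N -> s k.+2 <= c * (s k + s k.+1)) ->
  0 <= eps -> s i <= eps -> s i.+1 <= eps ->
  forall k, (i <= k < m)%N -> s k <= (2 * c + 1) ^+ m * eps.
Proof.
move=> c0 rec eps0 si si1.
have M1 : 1 <= 2 * c + 1 by lra.
set M := 2 * c + 1 in M1 *.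
have bound_ge0 t : 0 <= M ^+ t * eps.
  by apply: mulr_ge0 => //; apply: exprn_ge0; apply: le_trans M1.
have grow t : M ^+ t * eps <= M ^+ t.+1 * eps.
  by rewrite exprS -mulrA; apply: ler_peMl.
have pair t : ((i + t).+1 < m)%N ->
    s (i + t)%N <= M ^+ t * eps /\ s (i + t)%N.+1 <= M ^+ t * eps.
  elim: t => [|t IH] lt; first by rewrite addn0 expr0 mul1r.
  have [h0 h1] := IH ltac:(lia).
  rewrite addnS; split; first exact: le_trans h1 (grow t).
  apply: le_trans (rec _ _) _; first by rewrite -addnS.
  have := bound_ge0 t; rewrite exprS -mulrA /M; nra.
move=> k /andP[ik km].
have le_pow t : (t <= m)%N -> M ^+ t * eps <= M ^+ m * eps.
  by move=> tm; rewrite ler_wpM2r // ler_weXn2l.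
case: (ltngtP i k) ik => // [ik | <-] _; last first.
  by have := le_pow 0%N (leq0n m); rewrite expr0 mul1r; apply: le_trans.
have [_ h] := pair (k - i.+1)%N ltac:(lia).
rewrite -addnS subnSK // subnKC 1?ltnW // in h.
by apply: le_trans h (le_pow _ _); lia.
Qed.

Lemma bounded_of_two_consecutive_small (R : realFieldType) (c : R) (m : nat)
    (s : nat -> R) (i : nat) (eps : R) :
  0 <= c ->
  (forall k, (k.+2 < m)%N -> s k.+2 <= c * (s k + s k.+1)) ->
  (forall k, (k.+2 < m)%N -> s k <= c * (s k.+2 + s k.+1)) ->
  (i.+1 < m)%N -> 0 <= eps -> s i <= eps -> s i.+1 <= eps ->
  forall k, (k < m)%N -> s k <= (2 * c + 1) ^+ m * eps.
Proof.
move=> c0 fwd bwd im eps0 si si1 k km.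
have [ik|ki] := leqP i k.
  by apply: (propagate_forward c0 fwd eps0 si si1); rewrite ik.
(* Reflecting the sequence turns the backward recurrence into a forward one. *)
pose r j := s (m.-1 - j)%N.
have rK j : (j < m)%N -> r (m.-1 - j)%N = s j.
  by move=> jm; rewrite /r subKn //; lia.
have rfwd j : (j.+2 < m)%N -> r j.+2 <= c * (r j + r j.+1).
  move=> jm; rewrite /r.
  have jm' : ((m.-1 - j.+2).+2 < m)%N by lia.
  have := bwd _ jm'.
  have -> : ((m.-1 - j.+2).+2 = m.-1 - j)%N by lia.
  by have -> : ((m.-1 - j.+2).+1 = m.-1 - j.+1)%N by lia.
rewrite -rK //; apply: (propagate_forward c0 rfwd eps0 (i := (m.-1 - i.+1)%N)).
- by rewrite rK.
- have -> : ((m.-1 - i.+1).+1 = m.-1 - i)%N by lia.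
  by rewrite rK // ltnW.
- apply/andP; split; lia.
Qed.

Lemma propagated_bound_lt1 (R : rcfType) (K B : R) (m : nat) :
  1 <= B -> 4 * K ^+ 2 + 1 < B ^+ 2 -> (0 < m)%N ->
  (2 * (2 * K ^+ 2 / (B ^- 5) ^+ 2) + 1) ^+ m
    * (B ^- (10 * m) * (Num.sqrt m%:R)^-1) ^+ 2 *+ m < 1.
Proof.
move=> B1 KB m0; set c := 2 * _ / _; set Y := B ^+ 10.
have B0 : 0 < B by lra.
have Y_gt0 : 0 < Y by rewrite exprn_gt0.
have cE : c = 2 * K ^+ 2 * Y by rewrite /c -exprVn invrK -exprM.
have c_ge0 : 0 <= c by rewrite cE; have := sqr_ge0 K; nra.
have M_lt : 2 * c + 1 < Y ^+ 2.
  have : B ^+ 2 <= Y by rewrite ler_weXn2l.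
  rewrite cE; nra.
have eE : (B ^- (10 * m) * (Num.sqrt m%:R)^-1) ^+ 2 = (Y ^+ m ^+ 2)^-1 / m%:R.
  by rewrite exprMn !exprVn sqr_sqrtr ?ler0n // /Y exprM.
rewrite eE -mulr_natr -!mulrA mulVf ?pnatr_eq0 -?lt0n // mulr1.
rewrite exprAC ltr_pdivrMr ?exprn_gt0 // mul1r ltrXn2r -?lt0n //; lra.
Qed.

Section BlockRecurrence.
Variable R : realType.
Local Notation C := R[i].

Lemma cdot_row_conjT p (A : 'M[C]_p) (v : 'rV[C]_p) g :
  cdot (row g A) v = (A *m conjT v) g 0.
Proof. by rewrite mxE; apply: eq_bigr => j _; rewrite !mxE. Qed.

Lemma orthH1_mulmx_conjT p (A : 'M[C]_p) (v : 'rV[C]_p) (g : 'I_p) :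
  (forall h, H1 A h -> cdot h v = 0) -> (g : nat) <> 0%N ->
  (A *m conjT v) g 0 = 0.
Proof.
move=> orth g0; rewrite -cdot_row_conjT; apply: orth.
exists (fun k => if k == g then 1 else 0); split.
  by move=> k k0; case: eqP => // kg; case: g0; rewrite -kg.
rewrite (bigD1 g) //= eqxx scale1r big1 ?addr0 // => k /negbTE ->.
by rewrite scale0r.
Qed.

Lemma submxcol_conjT p k (q_ : 'I_k -> nat) (A : 'M[C]_(p, \sum_j q_ j)) j :
  submxcol (conjT A) j = conjT (submxrow A j).
Proof. by apply/matrixP => r c; rewrite !mxE. Qed.

Variables (b m : nat) (D U T : 'I_m -> 'M[C]_b) (z : C).

Lemma submxcol_blockXz_mul (w : 'cV[C]_(\sum_(i < m) b)) k :
  submxcol (blockXz D U T z *m w) k =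
  (D k - z%:M) *m submxcol w k + T (ord_pred k) *m submxcol w (ord_pred k)
  + U (ordS k) *m submxcol w (ordS k).
Proof.
have pick1 (a : 'I_m) (F : 'I_m -> 'M[C]_b) (G : 'I_m -> 'cV[C]_b) :
    \sum_j ((if j == a then F j else 0) *m G j) = F a *m G a.
  by rewrite (bigD1 a) //= eqxx big1 ?addr0 // => j /negbTE ->; rewrite mul0mx.
have scalar_block : submxcol (z%:M *m w) k = z%:M *m submxcol w k.
  by rewrite !mul_scalar_mx; apply/matrixP => r c; rewrite !mxE.
rewrite /blockXz mulmxBl submxcolB scalar_block mulmxBl.
rewrite -[w in blockX _ _ _ *m w]submxcolK /blockX mul_mxblock_mxrow mxcolK.
under eq_bigr do rewrite !mulmxDl.
rewrite !big_split /= (pick1 k (fun=> D k) (submxcol w)) !pick1.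
set d := D k *m _; set t := T _ *m _.
by rewrite (addrAC (d + t)) (addrAC d).
Qed.

Variable v : 'rV[C]_(\sum_(i < m) b).
Hypothesis orth : forall h, H1 (blockXz D U T z) h -> cdot h v = 0.

Lemma block_recurrence (k : 'I_m) : (0 < k)%N ->
  (D k - z%:M) *m conjT (vblock v k)
  + T (ord_pred k) *m conjT (vblock v (ord_pred k))
  + U (ordS k) *m conjT (vblock v (ordS k)) = 0.
Proof.
move=> k0; rewrite /vblock -!submxcol_conjT -submxcol_blockXz_mul.
apply/matrixP => r c; rewrite [LHS]mxE [RHS]mxE (ord1 c) orthH1_mulmx_conjT //.
have b0 : (0 < b)%N := leq_ltn_trans (leq0n r) (ltn_ord r).
(* A row of block [k > 0] is not the first row of [X_z]. *)
rewrite tagnat.RankEsum (bigD1 (Ordinal (ltn_trans k0 (ltn_ord k)))) //=; lia.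
Qed.

(* Junk value [0] for indices [j >= m]. *)
Definition block_sqnorm (j : nat) : R :=
  oapp (fun o : 'I_m => sqnorm (vblock v o)) 0 (insub j).

Lemma block_sqnormE (o : 'I_m) : block_sqnorm o = sqnorm (vblock v o).
Proof. by rewrite /block_sqnorm valK. Qed.

Variable K : R.
Hypotheses (HE : eventEK D U T z K) (K0 : 0 <= K) (b0 : (0 < b)%N).
Let c := 2 * K ^+ 2 / ((b%:R : R) ^- 5) ^+ 2.

Lemma block_sqnorm_recurrence j : (j.+2 < m)%N ->
  block_sqnorm j.+2 <= c * (block_sqnorm j + block_sqnorm j.+1) /\
  block_sqnorm j <= c * (block_sqnorm j.+2 + block_sqnorm j.+1).
Proof.
move=> jm.
have jm1 : (j.+1 < m)%N by apply: ltnW.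
have jm0 : (j < m)%N by apply: ltnW.
pose o := Ordinal jm1; pose o0 := Ordinal jm0; pose o2 := Ordinal jm.
have pred_o : ord_pred o = o0.
  by apply: val_inj; rewrite /= modnDr modn_small.
have succ_o : ordS o = o2 by apply: val_inj; rewrite /= modn_small.
have := block_recurrence (ltn0Sn j : (0 < o)%N); rewrite pred_o succ_o.
set d := _ *m conjT (vblock v o); set t := _ *m _; set u := _ *m _ => rec.
have e0 : 0 < (b%:R : R) ^- 5 by rewrite invr_gt0 exprn_gt0 // ltr0n.
have [_ HD _ _ _] := HE o; have [HU _ _ HUs _] := HE o2.
have [_ _ HT _ HTs] := HE o0.
have s0 : block_sqnorm j = sqnorm (conjT (vblock v o0)).
  by rewrite sqnorm_conjT -block_sqnormE.
have s1 : block_sqnorm j.+1 = sqnorm (conjT (vblock v o)).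
  by rewrite sqnorm_conjT -block_sqnormE.
have s2 : block_sqnorm j.+2 = sqnorm (conjT (vblock v o2)).
  by rewrite sqnorm_conjT -block_sqnormE.
rewrite s0 s1 s2.
have fwd : u + t + d = 0 by rewrite -rec [RHS]addrC [d + t]addrC addrA.
have bwd : t + u + d = 0 by rewrite (addrC t).
split.
- exact: (sqnorm_le_of_mulmx_add3_eq0 fwd HUs HT HD e0 K0).
- exact: (sqnorm_le_of_mulmx_add3_eq0 bwd HTs HU HD e0 K0).
Qed.

Lemma sqnorm_le_of_consecutive_small_blocks (i : nat) (eps : R) :
  (i.+1 < m)%N -> 0 <= eps -> block_sqnorm i <= eps -> block_sqnorm i.+1 <= eps ->
  sqnorm v <= (2 * c + 1) ^+ m * eps *+ m.
Proof.
move=> im eps0 si si1.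
have c_ge0 : 0 <= c by rewrite /c !mulr_ge0 ?sqr_ge0 // !(invr_ge0, exprn_ge0).
rewrite (sqnorm_submxrow v) -[X in _ *+ X]card_ord -sumr_const.
apply: ler_sum => k _; rewrite -block_sqnormE.
apply: (bounded_of_two_consecutive_small c_ge0 _ _ im eps0 si si1) => // l lm.
- exact: (block_sqnorm_recurrence lm).1.
- exact: (block_sqnorm_recurrence lm).2.
Qed.

End BlockRecurrence.

Theorem proposition2p6 (R : realType) :
  exists m0 : nat,
  forall (K : R) (z : R[i]), 0 < K ->
  exists N : nat,
  forall (b m : nat), (m0 <= m)%N -> (m <= b)%N -> (N <= b * m)%N ->
  forall Dt Ut Tt : 'I_m -> 'M[R[i]]_b,
  let D := fun i => scaleb (Dt i) in
  let U := fun i => scaleb (Ut i) in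
  let T := fun i => scaleb (Tt i) in
  eventEK D U T z K ->
  forall v : 'rV[R[i]]_(\sum_(i < m) b),
    vnorm v = 1 ->
    (forall h, H1 (blockXz D U T z) h -> cdot h v = 0) ->
    forall i j : 'I_m, (j : nat) = i.+1 ->
      ((b%:R : R) ^- (10 * m) * (Num.sqrt (m%:R : R))^-1 <= vnorm (vblock v i))
      \/
      ((b%:R : R) ^- (10 * m) * (Num.sqrt (m%:R : R))^-1 <= vnorm (vblock v j)).
Proof.
exists 0%N => K z K0.
set N := Num.Def.archi_bound (4 * K ^+ 2 + 1).
have KN : 4 * K ^+ 2 + 1 < N%:R by apply: archi_boundP; have := sqr_ge0 K; lra.
exists N => b m _ mb Nbm Dt Ut Tt D U T HE v v1 orth i j ji.
set e := _ * _.
have [|small_i] := lerP e (vnorm (vblock v i)); first by left.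
have [|small_j] := lerP e (vnorm (vblock v j)); first by right.
have m_gt0 : (0 < m)%N := leq_ltn_trans (leq0n i) (ltn_ord i).
have b_gt0 : (0 < b)%N := leq_trans m_gt0 mb.
have B1 : 1 <= (b%:R : R) by rewrite ler1n.
have KB : 4 * K ^+ 2 + 1 < (b%:R : R) ^+ 2.
  apply: lt_le_trans KN _; rewrite -natrX ler_nat; apply: leq_trans Nbm _.
  by rewrite expnS expn1 leq_mul2l mb orbT.
have sq_small (k : 'I_m) : vnorm (vblock v k) < e -> block_sqnorm v k <= e ^+ 2.
  move=> small; rewrite block_sqnormE -sqr_vnorm ler_pXn2r ?nnegrE ?sqrtr_ge0 ?ltW //.
  exact: le_lt_trans (sqrtr_ge0 _) small.
have im : (i.+1 < m)%N by rewrite -ji ltn_ord.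
have small_i1 : block_sqnorm v i.+1 <= e ^+ 2 by rewrite -ji; apply: sq_small.
have := sqnorm_le_of_consecutive_small_blocks orth HE (ltW K0) b_gt0 im
  (sqr_ge0 e) (sq_small i small_i) small_i1.
rewrite -sqr_vnorm v1 expr1n => /le_lt_trans /(_ (propagated_bound_lt1 B1 KB m_gt0)).
by rewrite ltxx.
Qed.
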